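(* Let $X\subseteq\Omega$ be club in $\Omega$ with $0\notin X$. If $\alpha<\beta<\varepsilon_{\Omega+1}$, then $\Theta_X(\alpha)<\Theta_X(\beta)$ if and only if $\alpha^*<\Theta_X(\beta)$.
   Context: $\Omega$ is the first uncountable ordinal; $\varepsilon_{\Omega+1}$ the least $\varepsilon>\Omega$ with $\omega^\varepsilon=\varepsilon$. Every $0<\xi<\varepsilon_{\Omega+1}$ has a unique $\Omega$-normal form $\xi=\Omega^{\alpha}\beta+\gamma$ with $0<\beta<\Omega$, $\gamma<\Omega^{\alpha}$; $C(0)=\{0\}$, $C(\Omega^\alpha\beta+\gamma)=C(\alpha)\cup C(\gamma)\cup\{\beta\}$; $\xi^*=\max C(\xi)$. $\Theta_X(\xi)$ is defined by recursion on $\xi<\varepsilon_{\Omega+1}$ as the least $\theta\in X$ with $\theta>\xi^*$ such that every $\zeta<\xi$ with $\zeta^*<\theta$ satisfies $\Theta_X(\zeta)<\theta$. *)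

From Stdlib Require Import ClassicalEpsilon.

Set Implicit Arguments.

(** A strict well-order whose proper initial segments are all countable but
    which is itself uncountable has order type exactly omega_1 (unique up to
    a unique isomorphism).  [ozero] is its least element (the ordinal 0). *)
Record Omega1 : Type := {
  ocar :> Type;
  olt : ocar -> ocar -> Prop;
  ozero : ocar;
  olt_irrefl : forall x, ~ olt x x;
  olt_trans : forall x y z, olt x y -> olt y z -> olt x z;
  olt_total : forall x y, olt x y \/ x = y \/ olt y x;
  olt_wf : well_founded olt;
  ozero_least : forall y, ~ olt y ozero;
  olt_segment_countable :
    forall x, exists f : {y | olt y x} -> nat,
      forall u v, f u = f v -> u = v;
  olt_uncountable :
    ~ exists f : ocar -> nat, forall u v, f u = f v -> u = v
}.

Arguments olt {_} _ _.
Arguments ozero {_}.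

Section Defs.
Variable W : Omega1.

Definition unbounded (X : W -> Prop) : Prop :=
  forall a : W, exists x, X x /\ olt a x.

(** closed: every nonzero l below which X is cofinal (hence l is a limit
    and l = sup (X ∩ l)) belongs to X. *)
Definition closed (X : W -> Prop) : Prop :=
  forall l : W, (exists a, olt a l) ->
    (forall a, olt a l -> exists x, X x /\ olt a x /\ olt x l) -> X l.

Definition club (X : W -> Prop) : Prop := closed X /\ unbounded X.

(** * Ordinals below epsilon_{Omega+1}, via Omega-normal forms.
    [P a b g] denotes Omega^a * b + g. *)
Inductive oterm : Type :=
| Z : oterm
| P : oterm -> W -> oterm -> oterm.

(** ordinal comparison of terms (correct on normal forms) *)
Fixpoint tlt (x y : oterm) : Prop :=
  match x, y with
  | Z, Z => False
  | Z, P _ _ _ => True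
  | P _ _ _, Z => False
  | P a b g, P a' b' g' =>
      tlt a a' \/ (a = a' /\ (olt b b' \/ (b = b' /\ tlt g g')))
  end.

(** Omega-normal form: xi = Omega^a b + g with 0 < b < Omega, g < Omega^a,
    hereditarily. *)
Fixpoint NF (x : oterm) : Prop :=
  match x with
  | Z => True
  | P a b g =>
      NF a /\ olt ozero b /\ NF g /\
      match g with Z => True | P a' _ _ => tlt a' a end
  end.

Definition omax (x y : W) : W :=
  if excluded_middle_informative (olt x y) then y else x.

(** C(0) = {0}, C(Omega^a b + g) = C(a) ∪ C(g) ∪ {b};  star x = max C(x). *)
Fixpoint inC (x : oterm) (c : W) : Prop :=
  match x with
  | Z => c = ozero
  | P a b g => inC a c \/ inC g c \/ c = b
  end.

Fixpoint star (x : oterm) : W :=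
  match x with
  | Z => ozero
  | P a b g => omax (star a) (omax b (star g))
  end.

(** Graph of Theta_X, by the recursion: Theta_X(xi) is the least theta in X
    with theta > xi^* such that every zeta < xi with zeta^* < theta
    satisfies Theta_X(zeta) < theta. *)
Inductive Theta_rel (X : W -> Prop) : oterm -> W -> Prop :=
| Theta_intro : forall (xi : oterm) (th : W),
    X th ->
    olt (star xi) th ->
    (forall zeta, NF zeta -> tlt zeta xi -> olt (star zeta) th ->
       exists t, Theta_rel X zeta t /\ olt t th) ->
    (forall th', X th' -> olt (star xi) th' -> olt th' th ->
       exists zeta, NF zeta /\ tlt zeta xi /\ olt (star zeta) th' /\
         exists t, Theta_rel X zeta t /\ ~ olt t th') ->
    Theta_rel X xi th.

Definition Theta (X : W -> Prop) (xi : oterm) : W :=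
  epsilon (inhabits (@ozero W)) (Theta_rel X xi).

End Defs.

Arguments Z {_}.
Arguments club {_} _.
Arguments unbounded {_} _.
Arguments closed {_} _.
Arguments tlt {_} _ _.
Arguments NF {_} _.
Arguments star {_} _.
Arguments inC {_} _ _.
Arguments omax {_} _ _.
Arguments Theta {_} _ _.
Arguments Theta_rel {_} _ _ _.

(** Three ingredients make [Theta X] well defined, after which the lemma is
    immediate from the defining clauses of [Theta X beta]:
    - the ordering of normal forms is well founded (a lexicographic nesting
      of the well-foundedness of [olt]);
    - there are only countably many terms [z] with [star z] below a given
      [theta], so, [Omega] being regular, their [Theta]-values are bounded
      below [Omega];
    - for a club [X], every function [F : W -> W] has closure points in [X]
      above any given ordinal: the supremum of an [omega]-chain of elements
      of [X], each bounding the [F]-image of the segment below its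
      predecessor.
    Taking [F a] to bound the [Theta]-values of the terms [z] with
    [star z <= a] yields a candidate for [Theta X xi]; the least candidate
    is the value prescribed by the recursion. *)

From Stdlib Require Import ClassicalEpsilon Classical Cantor.

Section Omega.
Variable W : Omega1.

Lemma olt_least (S : W -> Prop) (x : W) :
  S x -> exists m, S m /\ forall y, olt y m -> ~ S y.
Proof.
  intros Sx. apply NNPP. intros Hnone.
  assert (Hempty : forall y, ~ S y).
  { intros y. induction y as [y IH] using (well_founded_ind (olt_wf W)).
    intros Sy. apply Hnone. exists y. split; assumption. }
  exact (Hempty x Sx).
Qed.

Lemma omax_lt_inv (x y z : W) : olt (omax x y) z -> olt x z /\ olt y z.
Proof.
  unfold omax. destruct (excluded_middle_informative (olt x y)) as [Hxy|Hxy]; intros H.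
  - split; [apply olt_trans with y|]; assumption.
  - split; [exact H|].
    destruct (olt_total _ x y) as [l|[e|l]]; [contradiction|subst; exact H|].
    apply olt_trans with x; assumption.
Qed.

Definition segment_enc (c : W) : {y | olt y c} -> nat :=
  proj1_sig (constructive_indefinite_description _ (olt_segment_countable W c)).

Definition segment_code (c x : W) : nat :=
  match excluded_middle_informative (olt x c) with
  | left Hx => segment_enc c (exist _ x Hx)
  | right _ => 0
  end.

Lemma segment_code_inj (c x y : W) :
  olt x c -> olt y c -> segment_code c x = segment_code c y -> x = y.
Proof.
  unfold segment_code. intros Hx Hy.
  destruct (excluded_middle_informative (olt x c)) as [px|]; [|contradiction].
  destruct (excluded_middle_informative (olt y c)) as [py|]; [|contradiction].
  intros e.
  apply (proj2_sig (constructive_indefinite_description _ (olt_segment_countable W c))) in e.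
  exact (f_equal (@proj1_sig _ _) e).
Qed.

(** Otherwise each [x] lies at or below some [f n], and [x] would be coded by
    [n] together with its code in the segment below [f n]. *)
Lemma nat_seq_bounded (f : nat -> W) : exists u, forall n, olt (f n) u.
Proof.
  apply NNPP. intros Hunb.
  assert (Hcover : forall x, exists n, ~ olt (f n) x).
  { intros x. apply NNPP. intros h. apply Hunb. exists x. intros n.
    apply NNPP. intros h'. apply h. exists n. exact h'. }
  destruct (choice _ Hcover) as [idx Hidx].
  assert (Hle : forall x, x = f (idx x) \/ olt x (f (idx x))).
  { intros x. destruct (olt_total _ (f (idx x)) x) as [l|[e|l]].
    - contradiction (Hidx x l).
    - left; symmetry; exact e.
    - right; exact l. }
  apply (olt_uncountable W).
  exists (fun x => to_nat (idx x,
            if excluded_middle_informative (x = f (idx x)) then 0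
            else S (segment_code (f (idx x)) x))).
  intros u v e. apply to_nat_inj in e. injection e as ei ec. rewrite <- ei in ec.
  destruct (excluded_middle_informative (u = f (idx u))) as [eu|nu];
  destruct (excluded_middle_informative (v = f (idx u))) as [ev|nv];
    try discriminate.
  - congruence.
  - injection ec as ec. apply (segment_code_inj (f (idx u))); [| |exact ec].
    + destruct (Hle u); [contradiction|assumption].
    + destruct (Hle v) as [h|h]; rewrite <- ei in h; [contradiction|exact h].
Qed.

Lemma countable_family_bounded (I : Type) (D : I -> Prop) (code : I -> nat) (f : I -> W) :
  (forall i j, D i -> D j -> code i = code j -> i = j) ->
  exists u, forall i, D i -> olt (f i) u.
Proof.
  intros Hinj.
  set (g := fun n => epsilon (inhabits (@ozero W))
                       (fun w => exists i, D i /\ code i = n /\ w = f i)).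
  destruct (nat_seq_bounded g) as [u Hu]. exists u. intros i Di.
  assert (Hg : exists j, D j /\ code j = code i /\ g (code i) = f j).
  { apply (epsilon_spec (inhabits ozero)
             (fun w => exists j, D j /\ code j = code i /\ w = f j)).
    exists (f i), i. auto. }
  destruct Hg as [j (Dj & ej & gj)].
  rewrite <- (Hinj j i Dj Di ej), <- gj. apply Hu.
Qed.

Lemma segment_image_bounded (F : W -> W) (a : W) :
  exists u, forall b, olt b a -> olt (F b) u.
Proof.
  apply (countable_family_bounded W (fun b => olt b a) (segment_code a) F).
  intros x y; apply segment_code_inj.
Qed.

Fixpoint term_code (c : W) (z : oterm W) : nat :=
  match z with
  | Z => 0
  | P a b g => S (to_nat (term_code c a, to_nat (segment_code c b, term_code c g)))
  end.

Lemma term_code_inj (c : W) (z1 z2 : oterm W) :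
  olt (star z1) c -> olt (star z2) c -> term_code c z1 = term_code c z2 -> z1 = z2.
Proof.
  revert z2. induction z1 as [|a1 IHa b1 g1 IHg];
    intros [|a2 b2 g2] h1 h2 e; cbn [term_code] in e; try discriminate; [reflexivity|].
  simpl in h1, h2.
  apply omax_lt_inv in h1 as [ha1 h1]. apply omax_lt_inv in h1 as [hb1 hg1].
  apply omax_lt_inv in h2 as [ha2 h2]. apply omax_lt_inv in h2 as [hb2 hg2].
  apply eq_add_S, to_nat_inj, pair_equal_spec in e as [ea e].
  apply to_nat_inj, pair_equal_spec in e as [eb eg].
  f_equal; [apply IHa|apply (segment_code_inj c)|apply IHg]; assumption.
Qed.

Lemma star_le_bounded (f : oterm W -> W) (a : W) :
  exists u, forall z, ~ olt a (star z) -> olt (f z) u.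
Proof.
  destruct (nat_seq_bounded (fun _ => a)) as [c Hc].
  destruct (countable_family_bounded (oterm W) (fun z => olt (star z) c) (term_code c) f)
    as [u Hu].
  { intros z1 z2; apply term_code_inj. }
  exists u. intros z hz. apply Hu.
  destruct (olt_total _ (star z) a) as [l|[e|l]].
  - apply olt_trans with a; [exact l|exact (Hc 0)].
  - rewrite e; exact (Hc 0).
  - contradiction.
Qed.

Lemma nat_seq_sup (f : nat -> W) :
  (forall n, olt (f n) (f (S n))) ->
  exists u, (forall n, olt (f n) u) /\ (forall a, olt a u -> exists n, olt a (f n)).
Proof.
  intros Hinc. destruct (nat_seq_bounded f) as [u0 Hu0].
  destruct (olt_least (fun u => forall n, olt (f n) u) u0 Hu0) as [u [Hu Hmin]].
  exists u. split; [exact Hu|].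
  intros a ha. apply Hmin, not_all_ex_not in ha as [n hn].
  exists (S n). destruct (olt_total _ a (f n)) as [l|[e|l]].
  - apply olt_trans with (f n); [exact l|apply Hinc].
  - rewrite e; apply Hinc.
  - contradiction.
Qed.

Lemma club_closure_point (X : W -> Prop) (F : W -> W) (s : W) :
  club X -> exists u, X u /\ olt s u /\ forall a, olt a u -> olt (F a) u.
Proof.
  intros [Hclosed Hunb].
  assert (Hnext : forall a, exists x, X x /\ olt a x /\ forall b, olt b a -> olt (F b) x).
  { intros a. destruct (segment_image_bounded F a) as [c Hc].
    destruct (Hunb (omax a c)) as [x [Xx Lx]]. apply omax_lt_inv in Lx as [Lax Lcx].
    exists x. split; [|split]; [assumption|assumption|].
    intros b hb. apply olt_trans with c; auto. }
  destruct (choice _ Hnext) as [next Hnext'].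
  set (sq := fun n => Nat.iter n next s).
  assert (sqS : forall n, sq (S n) = next (sq n)) by reflexivity.
  destruct (nat_seq_sup sq) as [u [Hub Hlim]].
  { intros n. rewrite sqS. apply Hnext'. }
  exists u. split; [|split].
  - apply Hclosed; [exists s; exact (Hub 0)|].
    intros a ha. destruct (Hlim a ha) as [n hn]. exists (sq (S n)).
    rewrite sqS. destruct (Hnext' (sq n)) as (Xn & Ln & _).
    split; [exact Xn|split]; [apply olt_trans with (sq n); assumption|].
    rewrite <- sqS. apply Hub.
  - exact (Hub 0).
  - intros a ha. destruct (Hlim a ha) as [n hn].
    apply olt_trans with (sq (S n)); [|apply Hub].
    rewrite sqS. apply Hnext', hn.
Qed.

Definition nf_lt (x y : oterm W) : Prop := NF x /\ tlt x y.

Lemma Acc_nf_lt_Z : Acc nf_lt Z.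
Proof. constructor. intros [|a b g] [_ H]; contradiction. Qed.

Lemma Acc_nf_lt_P (a : oterm W) :
  Acc nf_lt a -> forall b g, NF (P a b g) -> Acc nf_lt (P a b g).
Proof.
  induction 1 as [a _ IHa]. intros b.
  induction b as [b IHb] using (well_founded_ind (olt_wf W)). intros g Hn.
  assert (Ag : Acc nf_lt g).
  { destruct Hn as (_ & _ & Hg & Hexp). destruct g as [|a' b' g']; [apply Acc_nf_lt_Z|].
    apply IHa; [split; [apply Hg|exact Hexp]|exact Hg]. }
  revert Hn. induction Ag as [g _ IHg]. intros Hn.
  constructor. intros [|a' b' g'] [Ny Ly]; [apply Acc_nf_lt_Z|].
  destruct Ly as [L|[ea [L|[eb L]]]].
  - apply IHa; [split; [apply Ny|exact L]|exact Ny].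
  - subst a'. apply IHb; assumption.
  - subst a' b'. apply IHg; [split; [apply Ny|exact L]|exact Ny].
Qed.

Lemma nf_lt_wf : well_founded nf_lt.
Proof.
  intros x. constructor. intros y [Ny _]. clear x. induction y as [|a IHa b g _].
  - apply Acc_nf_lt_Z.
  - apply Acc_nf_lt_P; [apply IHa, Ny|exact Ny].
Qed.

Section Theta.
Variable X : W -> Prop.

Lemma Theta_rel_functional (xi : oterm W) (t1 t2 : W) :
  Theta_rel X xi t1 -> Theta_rel X xi t2 -> t1 = t2.
Proof.
  (* The recursive occurrences of [Theta_rel] are nested under [exists], so
     the generated induction principle is useless; recurse on the derivation. *)
  revert xi t1 t2. fix IH 4.
  intros xi t1 t2 H1 H2.
  destruct H1 as [xi t1 X1 s1 below1 least1], H2 as [xi t2 X2 s2 below2 least2].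
  destruct (olt_total _ t1 t2) as [lt|[eq|lt]]; [exfalso|exact eq|exfalso].
  - destruct (least2 t1 X1 s1 lt) as [z (nz & zl & sz & t & Ht & nt)].
    destruct (below1 z nz zl sz) as [t' [Ht' lt']].
    rewrite (IH _ _ _ Ht' Ht) in lt'. contradiction.
  - destruct (least1 t2 X2 s2 lt) as [z (nz & zl & sz & t & Ht & nt)].
    destruct (below2 z nz zl sz) as [t' [Ht' lt']].
    rewrite <- (IH _ _ _ Ht Ht') in lt'. contradiction.
Qed.

Definition Theta_closed (xi : oterm W) (th : W) : Prop :=
  X th /\ olt (star xi) th /\
  forall z, NF z -> tlt z xi -> olt (star z) th -> olt (Theta X z) th.

Lemma Theta_closed_exists (xi : oterm W) : club X -> exists th, Theta_closed xi th.
Proof.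
  intros HX.
  destruct (choice _ (star_le_bounded (Theta X))) as [F HF].
  destruct (club_closure_point X F (star xi) HX) as [u (Xu & su & Fu)].
  exists u. split; [exact Xu|split; [exact su|]].
  intros z _ _ sz. apply olt_trans with (F (star z)).
  - apply HF, olt_irrefl.
  - apply Fu, sz.
Qed.

Lemma least_Theta_closed_Theta_rel (xi : oterm W) (th : W) :
  (forall z, NF z -> tlt z xi -> Theta_rel X z (Theta X z)) ->
  Theta_closed xi th -> (forall th', olt th' th -> ~ Theta_closed xi th') ->
  Theta_rel X xi th.
Proof.
  intros IH (Xth & sth & cth) Hmin. constructor; [exact Xth|exact sth| |].
  - intros z nz lz sz. exists (Theta X z). auto.
  - intros th' X' s' l'. apply Hmin in l'.
    apply NNPP. intros Hnone. apply l'. split; [exact X'|split; [exact s'|]].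
    intros z nz lz sz. apply NNPP. intros nt. apply Hnone.
    exists z. split; [exact nz|split; [exact lz|split; [exact sz|]]].
    exists (Theta X z). auto.
Qed.

Hypothesis HX : club X.

Lemma Theta_rel_Theta (xi : oterm W) : NF xi -> Theta_rel X xi (Theta X xi).
Proof.
  induction xi as [xi IH] using (well_founded_ind nf_lt_wf). intros Hn.
  unfold Theta. apply epsilon_spec.
  destruct (Theta_closed_exists xi HX) as [u Hu].
  destruct (olt_least (Theta_closed xi) u Hu) as [th [Hth Hmin]].
  exists th. apply least_Theta_closed_Theta_rel; [|exact Hth|exact Hmin].
  intros z nz lz. apply IH; [split|]; assumption.
Qed.

Lemma star_lt_Theta (xi : oterm W) : NF xi -> olt (star xi) (Theta X xi).
Proof. intros Hn. destruct (Theta_rel_Theta xi Hn) as [? ? _ s _ _]. exact s. Qed.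

Lemma Theta_lt_Theta (z xi : oterm W) :
  NF z -> NF xi -> tlt z xi -> olt (star z) (Theta X xi) ->
  olt (Theta X z) (Theta X xi).
Proof.
  intros nz nxi lz sz. destruct (Theta_rel_Theta xi nxi) as [? ? _ _ below _].
  destruct (below z nz lz sz) as [t [Ht lt]].
  rewrite (Theta_rel_functional _ _ _ (Theta_rel_Theta z nz) Ht). exact lt.
Qed.

End Theta.
End Omega.

Theorem lemma3p2 (W : Omega1) (X : W -> Prop)
  (HX : club X) (H0 : ~ X ozero)
  (alpha beta : oterm W) (Ha : NF alpha) (Hb : NF beta)
  (Hab : tlt alpha beta) :
  olt (Theta X alpha) (Theta X beta) <-> olt (star alpha) (Theta X beta).
Proof.
  split.
  - intros h. apply olt_trans with (Theta X alpha); [apply star_lt_Theta|]; assumption.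
  - apply Theta_lt_Theta; assumption.
Qed.
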